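(* Let $S$ be a square-free semigroup with idempotent set $E$, $D$ a division ring, and let $(\alpha,\xi),(\beta,\zeta)\in Z^2(S,D^* )$ be normal 2-cocycles. Let $\gamma: D^{\beta}_{\zeta}S\to D^{\alpha}_{\xi}S$ be a ring isomorphism with $\gamma(E)=E$. Then there exist an automorphism $\phi$ of the semigroup $S$ and $(\mu,\eta)\in F^0(S,\mathrm{Aut}(D))\times F^1(S,D^* )$ such that $\gamma(ds)=\mu_e(d)\,\eta(s)\,\phi(s)$ for all $d\in D$ and all $s=e\cdot s\cdot f\in S^*$.
   Context: $D$ is a division ring, $D^*$ its group of units, $\mathrm{Aut}(D)$ its group of ring automorphisms, and for $d\in D^*$, $\rho_d(x)=dxd^{-1}$. A square-free semigroup is a semigroup $S$ (product $s\cdot t$) with zero $\theta$ together with a finite set $E\subseteq S$ of nonzero pairwise orthogonal idempotents such that $S=\bigcup_{e,f\in E}e\cdot S\cdot f$ and $|e\cdot S\cdot f\setminus\{\theta\}|\le 1$ for all $e,f\in E$. $S^*=S\setminus\{\theta\}$; each $s\in S^*$ satisfies $s=e\cdot s\cdot f$ for unique $e,f\in E$. Put $S^{<0>}=E$, $S^{<n>}=\{(s_1,\dots,s_n)\in S^n: s_1\cdots s_n\ne\theta\}$; $F^n(S,G)$ is the group of functions $S^{<n>}\to G$. Write $\alpha_s=\alpha(s)$, $\mu_e=\mu(e)$. A 2-cocycle is a pair $(\alpha,\xi)\in F^1(S,\mathrm{Aut}(D))\times F^2(S,D^* )$ with $\alpha_s(\xi(t,u))\xi(s,t\cdot u)=\xi(s,t)\xi(s\cdot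 t,u)$ for $(s,t,u)\in S^{<3>}$ and $\alpha_s\circ\alpha_t=\rho_{\xi(s,t)}\circ\alpha_{s\cdot t}$ for $(s,t)\in S^{<2>}$; $Z^2(S,D^* )$ is their set. It is normal if $\alpha_e=1_D$ and $\xi(e,e)=1$ for all $e\in E$. For $(\alpha,\xi)\in Z^2(S,D^* )$, $D^{\alpha}_{\xi}S$ is the ring which is the left $D$-vector space with basis $S^*$ and multiplication extended by distributivity from $(d_1s)(d_2t)=d_1\alpha_s(d_2)\xi(s,t)\,(s\cdot t)$ if $s\cdot t\ne\theta$ and $0$ otherwise; $E$ is regarded as a subset of this ring. *)

From HB Require Import structures.
From mathcomp Require Import all_boot all_order all_algebra.
Set Implicit Arguments. Unset Strict Implicit. Unset Printing Implicit Defensive.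
Import GRing.Theory.
Local Open Scope ring_scope.

Definition division_ring (D : unitRingType) : Prop :=
  forall x : D, x != 0 -> x \is a GRing.unit.

Definition ring_aut (D : unitRingType) (g : D -> D) : Prop :=
  [/\ forall x y, g (x + y) = g x + g y,
      forall x y, g (x * y) = g x * g y,
      g 1 = 1 & bijective g].

Definition square_free (S : finType) (mul : S -> S -> S) (theta : S) (E : {set S}) : Prop :=
  associative mul /\
  [/\ (forall s, mul theta s = theta /\ mul s theta = theta),
      (forall e, e \in E -> e != theta /\ mul e e = e),
      (forall e f, e \in E -> f \in E -> e != f -> mul e f = theta),
      (forall s, exists e f t, [/\ e \in E, f \in E & s = mul (mul e t) f])
    & (forall e f s t, e \in E -> f \in E ->
         mul (mul e s) f != theta -> mul (mul e t) f != theta ->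
         mul (mul e s) f = mul (mul e t) f)].

Definition semigroup_aut (S : Type) (mul : S -> S -> S) (phi : S -> S) : Prop :=
  bijective phi /\ forall s t, phi (mul s t) = mul (phi s) (phi t).

(* 2-cocycles (alpha, xi) in Z^2(S, D^x); functions are total, conditions are
   imposed on S^<1>, S^<2>, S^<3> only. *)
Definition cocycle2 (S : finType) (mul : S -> S -> S) (theta : S) (D : unitRingType)
  (al : S -> D -> D) (xi : S -> S -> D) : Prop :=
  [/\ forall s, s != theta -> ring_aut (al s),
      forall s t, mul s t != theta -> xi s t \is a GRing.unit,
      forall s t u, mul (mul s t) u != theta ->
        al s (xi t u) * xi s (mul t u) = xi s t * xi (mul s t) u
    & forall s t, mul s t != theta -> forall x,
        al s (al t x) = xi s t * al (mul s t) x * (xi s t)^-1].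

Definition normal_cocycle (S : finType) (E : {set S}) (D : unitRingType)
  (al : S -> D -> D) (xi : S -> S -> D) : Prop :=
  forall e, e \in E -> al e =1 id /\ xi e e = 1.

(* S^* and the twisted semigroup ring D^al_xi S, as D-coefficient vectors on S^* *)
Definition Sstar (S : finType) (theta : S) : finType := {s : S | s != theta}.

Definition twisted (S : finType) (theta : S) (D : unitRingType) :=
  {ffun Sstar theta -> D}.

(* d s, for s : S (zero vector if s = theta) *)
Definition sing (S : finType) (theta : S) (D : unitRingType) (s : S) (d : D)
  : twisted theta D :=
  [ffun u : Sstar theta => if val u == s then d else 0].

Definition tmul (S : finType) (mul : S -> S -> S) (theta : S) (D : unitRingType)
  (al : S -> D -> D) (xi : S -> S -> D) (x y : twisted theta D) : twisted theta D :=
  [ffun u : Sstar theta =>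
     \sum_(s : Sstar theta) \sum_(t : Sstar theta)
        (if mul (val s) (val t) == val u
         then x s * al (val s) (y t) * xi (val s) (val t) else 0)].

Definition tone (S : finType) (theta : S) (E : {set S}) (D : unitRingType)
  : twisted theta D :=
  [ffun u : Sstar theta => if val u \in E then 1 else 0].

Definition ring_iso (S : finType) (theta : S) (E : {set S}) (D : unitRingType)
  (m1 m2 : twisted theta D -> twisted theta D -> twisted theta D)
  (g : twisted theta D -> twisted theta D) : Prop :=
  [/\ forall x y, g (x + y) = g x + g y,
      forall x y, g (m1 x y) = m2 (g x) (g y),
      g (tone theta E D) = tone theta E D
    & bijective g].

From HB Require Import structures.
From mathcomp Require Import all_boot all_order all_algebra.
Import GRing.Theory.
Local Open Scope ring_scope.
Set Implicit Arguments. Unset Strict Implicit.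

(* Since e.S.f has at most one nonzero element, a nonzero element y of a
   twisted semigroup ring with y = e y f is a monomial d s.  An element s of
   S^* satisfies s = e s f for some e, f in E, and since gamma(E) is contained
   in E, gamma(d s) again lies in such a corner, hence is a monomial.  Its
   support defines phi(s), the coefficient of gamma(1 s) defines eta(s) and the
   coefficient of gamma(d e) defines mu_e(d).  Normality of the cocycles makes
   e act as a left identity on e.S, so gamma(d s) = gamma(d e) gamma(1 s)
   = mu_e(d) eta(s) phi(s); multiplicativity of phi comes from
   gamma(s t) = gamma(s) gamma(t), and injectivity of phi from that of gamma. *)

Lemma ring_aut0 (D : unitRingType) (g : D -> D) : ring_aut g -> g 0 = 0.
Proof. by case=> gD _ _ _; apply: (addrI (g 0)); rewrite -gD !addr0. Qed.

Lemma ring_aut_unit (D : unitRingType) (g : D -> D) x :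
  ring_aut g -> x \is a GRing.unit -> g x \is a GRing.unit.
Proof.
by case=> _ gM g1 _ Ux; apply/unitrP; exists (g x^-1); rewrite -!gM mulVr ?mulrV.
Qed.

Lemma unit_neq0 (D : unitRingType) (x : D) : x \is a GRing.unit -> x != 0.
Proof. by apply: contraTneq => ->; rewrite unitr0. Qed.

Lemma sum_neq0 (V : nmodType) (I : finType) (F : I -> V) :
  \sum_i F i != 0 -> exists i, F i != 0.
Proof.
move=> nzF; apply/existsP; apply: contraR nzF; rewrite negb_exists => /forallP F0.
by apply/eqP/big1 => i _; apply/eqP; rewrite -[_ == 0]negbK F0.
Qed.

Section TwistedRing.
Variables (S : finType) (mul : S -> S -> S) (theta : S) (D : unitRingType).
Variables (al : S -> D -> D) (xi : S -> S -> D).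
Hypothesis mul_theta : forall s, mul theta s = theta /\ mul s theta = theta.
Hypothesis al0 : forall s, s != theta -> al s 0 = 0.

Lemma sing_theta (d : D) : sing theta theta d = 0.
Proof. by apply/ffunP => -[u u_neq]; rewrite !ffunE /= (negbTE u_neq). Qed.

Lemma singD s (a b : D) : sing theta s (a + b) = sing theta s a + sing theta s b.
Proof. by apply/ffunP => u; rewrite !ffunE; case: ifP; rewrite ?addr0. Qed.

Lemma sing_support s (d : D) u : sing theta s d u != 0 -> val u = s.
Proof. by rewrite ffunE; case: ifP => [/eqP|_ /eqP]. Qed.

Lemma sing_val (u : Sstar theta) (d : D) : sing theta (val u) d u = d.
Proof. by rewrite ffunE eqxx. Qed.

Lemma sing_val_inj (u : Sstar theta) : injective (sing theta (val u) : D -> _).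
Proof. by move=> a b /(congr1 (fun y : twisted theta D => y u)); rewrite !sing_val. Qed.

Lemma sing_inj s s' (d d' : D) : s != theta -> d != 0 ->
  sing theta s d = sing theta s' d' -> s = s' /\ d = d'.
Proof.
move=> s_neq d_neq sing_eq; pose u : Sstar theta := exist _ s s_neq.
have := sing_val u d; rewrite sing_eq => coef_eq.
have ss' : val u = s' by apply: (sing_support (d := d')); rewrite coef_eq.
by move: coef_eq; rewrite -ss' sing_val.
Qed.

Lemma sing_neq0 s (d : D) : s != theta -> d != 0 -> sing theta s d != 0.
Proof.
move=> s_neq d_neq; apply: contra_neq (d_neq) => sing0.
by case: (sing_inj s_neq d_neq (etrans sing0 (esym (sing_theta 0)))).
Qed.

Lemma tmul_sing s t (a b : D) :
  tmul mul al xi (sing theta s a) (sing theta t b) =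
  sing theta (mul s t) (a * al s b * xi s t).
Proof.
have [->|s_neq] := eqVneq s theta.
  rewrite sing_theta (proj1 (mul_theta t)) sing_theta; apply/ffunP => u.
  by rewrite !ffunE big1 // => i _; rewrite big1 // => j _; rewrite ffunE !mul0r if_same.
have [->|t_neq] := eqVneq t theta.
  rewrite sing_theta (proj2 (mul_theta s)) sing_theta; apply/ffunP => u.
  rewrite !ffunE big1 // => i _; rewrite big1 // => j _.
  by rewrite !ffunE al0 ?(valP i) // mulr0 mul0r if_same.
have off (v : Sstar theta) x (x_neq : x != theta) :
    v != exist _ x x_neq -> (val v == x) = false.
  by apply: contraNF => /eqP v_x; apply/eqP/val_inj.
apply/ffunP => u; rewrite !ffunE (bigD1 (exist _ s s_neq)) //=.
rewrite [X in _ + X]big1 ?addr0; last first.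
  move=> i /off i_off; rewrite big1 // => j _.
  by rewrite !ffunE i_off !mul0r if_same.
rewrite (bigD1 (exist _ t t_neq)) //= [X in _ + X]big1 ?addr0; last first.
  by move=> j /off j_off; rewrite !ffunE j_off al0 // mulr0 mul0r if_same.
by rewrite !ffunE /= !eqxx eq_sym.
Qed.

Lemma tmul_support (x y : twisted theta D) u : tmul mul al xi x y u != 0 ->
  exists s t, [/\ mul (val s) (val t) = val u, x s != 0 & y t != 0].
Proof.
rewrite ffunE => /sum_neq0 [s /sum_neq0 [t]].
case: ifP => [/eqP st_u nz|_ /eqP //].
exists s, t; split => //; apply: contra nz => /eqP->.
  by rewrite !mul0r.
by rewrite al0 ?(valP s) // mulr0 mul0r.
Qed.

End TwistedRing.

Section SquareFree.
Variables (S : finType) (mul : S -> S -> S) (theta : S) (E : {set S}).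
Hypothesis sqfS : square_free mul theta E.

Lemma sf_assoc : associative mul. Proof. by case: sqfS. Qed.

Lemma sf_theta s : mul theta s = theta /\ mul s theta = theta.
Proof. by case: sqfS => _ [+ _ _ _ _]; apply. Qed.

Lemma sf_idem e : e \in E -> e != theta /\ mul e e = e.
Proof. by case: sqfS => _ [_ + _ _ _]; apply. Qed.

Lemma sf_corner_uniq e f s t : e \in E -> f \in E ->
  mul (mul e s) f != theta -> mul (mul e t) f != theta ->
  mul (mul e s) f = mul (mul e t) f.
Proof. by case: sqfS => _ [_ _ _ _]; apply. Qed.

Lemma corner_idl e s f : e \in E -> s = mul (mul e s) f -> mul e s = s.
Proof. by move=> eE s_def; rewrite {1}s_def !sf_assoc (proj2 (sf_idem eE)) -s_def. Qed.

Lemma corner_idr e s f : f \in E -> s = mul (mul e s) f -> mul s f = s.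
Proof. by move=> fE s_def; rewrite {1}s_def -sf_assoc (proj2 (sf_idem fE)) -s_def. Qed.

Lemma sf_corner s : exists e f, [/\ e \in E, f \in E & s = mul (mul e s) f].
Proof.
case: sqfS => _ [_ _ _ + _] => /(_ s) [e [f [t [eE fE s_def]]]].
have es_s : mul e s = s by rewrite s_def !sf_assoc (proj2 (sf_idem eE)).
have sf_s : mul s f = s by rewrite s_def -sf_assoc (proj2 (sf_idem fE)).
by exists e, f; rewrite es_s sf_s.
Qed.

End SquareFree.

Section NormalCocycle.
Variables (S : finType) (mul : S -> S -> S) (theta : S) (E : {set S}).
Variables (D : unitRingType) (al : S -> D -> D) (xi : S -> S -> D).
Hypothesis sqfS : square_free mul theta E.
Hypothesis co_alxi : cocycle2 mul theta al xi.
Hypothesis normal_alxi : normal_cocycle E al xi.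

Local Notation tmul := (tmul mul al xi).

Lemma cocycle_al0 s : s != theta -> al s 0 = 0.
Proof. by case: co_alxi => al_aut _ _ _ s_neq; apply/ring_aut0/al_aut. Qed.

Lemma cocycle_al1 s : s != theta -> al s 1 = 1.
Proof. by case: co_alxi => al_aut _ _ _ /al_aut []. Qed.

Lemma cocycle_xi_idl e t : e \in E -> t != theta -> mul e t = t -> xi e t = 1.
Proof.
move=> eE t_neq et_t; case: co_alxi => _ xiU assoc _.
have [al_id xi_ee] := normal_alxi eE.
have := assoc e e t; rewrite (proj2 (sf_idem sqfS eE)) et_t al_id xi_ee mul1r.
move=> /(_ t_neq) xi_eq; apply: (mulIr (xiU e t _)); first by rewrite et_t.
by rewrite mul1r.
Qed.

Lemma cocycle_xi_idr s f : f \in E -> s != theta -> mul s f = s -> xi s f = 1.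
Proof.
move=> fE s_neq sf_s; case: co_alxi => _ xiU assoc _.
have := assoc s f f; rewrite (proj2 (sf_idem sqfS fE)) !sf_s (proj2 (normal_alxi fE)).
rewrite cocycle_al1 // mul1r => /(_ s_neq) xi_eq.
by apply: (mulrI (xiU s f _)); rewrite ?sf_s ?mulr1.
Qed.

Lemma tmul_idl_sing e s (x y : D) : e \in E -> s != theta -> mul e s = s ->
  tmul (sing theta e x) (sing theta s y) = sing theta s (x * y).
Proof.
move=> eE s_neq es_s.
rewrite (tmul_sing xi (sf_theta sqfS) cocycle_al0) es_s cocycle_xi_idl //.
by rewrite (proj1 (normal_alxi eE)) mulr1.
Qed.

Lemma sing_corner e s f (d : D) : e \in E -> f \in E -> s != theta ->
  s = mul (mul e s) f ->
  sing theta s d = tmul (sing theta e 1) (tmul (sing theta s d) (sing theta f 1)).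
Proof.
move=> eE fE s_neq s_def; have sf_s := corner_idr sqfS fE s_def.
rewrite (tmul_sing xi (sf_theta sqfS) cocycle_al0) sf_s cocycle_xi_idr // cocycle_al1 //.
by rewrite !mulr1 tmul_idl_sing ?mul1r // (corner_idl sqfS eE s_def).
Qed.

Lemma corner_support e f (y : twisted theta D) u : e \in E -> f \in E ->
  y = tmul (sing theta e 1) (tmul y (sing theta f 1)) ->
  y u != 0 -> exists a, val u = mul (mul e a) f.
Proof.
move=> eE fE -> /(tmul_support cocycle_al0) [s1 [t1 [<- /sing_support-> yf_t1]]].
have [s2 [t2 [<- _ /sing_support->]]] := tmul_support cocycle_al0 yf_t1.
by exists (val s2); rewrite (sf_assoc sqfS).
Qed.

Lemma corner_eq_sing e f (y : twisted theta D) (u : Sstar theta) :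
  e \in E -> f \in E ->
  y = tmul (sing theta e 1) (tmul y (sing theta f 1)) ->
  (exists a, val u = mul (mul e a) f) ->
  y = sing theta (val u) (y u).
Proof.
move=> eE fE y_def [a u_def]; apply/ffunP => v; rewrite ffunE.
have [->|v_neq] := eqVneq v u; first by rewrite eqxx.
rewrite val_eqE (negbTE v_neq); apply/eqP; apply: contraNT v_neq => yv_neq.
have [b v_def] := corner_support eE fE y_def yv_neq.
apply/eqP/val_inj; rewrite v_def u_def; apply: (sf_corner_uniq sqfS) => //.
  by rewrite -v_def (valP v).
by rewrite -u_def (valP u).
Qed.

End NormalCocycle.

Section Isomorphism.
Variables (S : finType) (mul : S -> S -> S) (theta : S) (E : {set S}).
Variables (D : unitRingType) (al : S -> D -> D) (xi : S -> S -> D).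
Variables (be : S -> D -> D) (ze : S -> S -> D).
Variable gamma : twisted theta D -> twisted theta D.
Hypothesis sqfS : square_free mul theta E.
Hypothesis divD : division_ring D.
Hypothesis co_alxi : cocycle2 mul theta al xi.
Hypothesis normal_alxi : normal_cocycle E al xi.
Hypothesis co_beze : cocycle2 mul theta be ze.
Hypothesis normal_beze : normal_cocycle E be ze.
Hypothesis iso_gamma : ring_iso E (tmul mul be ze) (tmul mul al xi) gamma.
Hypothesis gammaE :
  forall e, e \in E -> exists2 f, f \in E & gamma (sing theta e 1) = sing theta f 1.

Lemma gammaD x y : gamma (x + y) = gamma x + gamma y.
Proof. by case: iso_gamma. Qed.

Lemma gammaM x y : gamma (tmul mul be ze x y) = tmul mul al xi (gamma x) (gamma y).
Proof. by case: iso_gamma. Qed.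

Lemma gamma_inj : injective gamma.
Proof. by case: iso_gamma => _ _ _ /bij_inj. Qed.

Lemma gamma0 : gamma 0 = 0.
Proof. by apply: (addrI (gamma 0)); rewrite -gammaD !addr0. Qed.

Lemma gamma_sing_theta (d : D) : gamma (sing theta theta d) = 0.
Proof. by rewrite sing_theta gamma0. Qed.

Let tmul_sing_alxi := tmul_sing xi (sf_theta sqfS) (cocycle_al0 co_alxi).

Lemma gamma_sing_corner s : s != theta -> exists e' f', [/\ e' \in E, f' \in E &
  forall d, gamma (sing theta s d) = tmul mul al xi (sing theta e' 1)
    (tmul mul al xi (gamma (sing theta s d)) (sing theta f' 1))].
Proof.
move=> s_neq; have [e [f [eE fE s_def]]] := sf_corner sqfS s.
have [e' e'E gamma_e] := gammaE eE; have [f' f'E gamma_f] := gammaE fE.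
exists e', f'; split => // d.
rewrite {1}(sing_corner sqfS co_beze normal_beze d eE fE s_neq s_def).
by rewrite !gammaM gamma_e gamma_f.
Qed.

Lemma gamma_sing_monomial s d u : s != theta -> gamma (sing theta s 1) u != 0 ->
  gamma (sing theta s d) = sing theta (val u) (gamma (sing theta s d) u).
Proof.
move=> s_neq gamma_u; have [e' [f' [e'E f'E corner]]] := gamma_sing_corner s_neq.
apply: (corner_eq_sing sqfS co_alxi e'E f'E (corner d)).
exact: (corner_support sqfS co_alxi e'E f'E (corner 1) gamma_u).
Qed.

(* Junk values for s = theta: phi theta = theta, eta theta = 1, mu theta = id. *)
Definition supp_pick s := [pick u | gamma (sing theta s 1) u != 0].
Definition phi s := if supp_pick s is Some u then val u else theta.
Definition eta s := if supp_pick s is Some u then gamma (sing theta s 1) u else 1.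
Definition mu e d := if supp_pick e is Some u then gamma (sing theta e d) u else d.

Lemma supp_pick_some s : s != theta ->
  exists u, supp_pick s = Some u /\ gamma (sing theta s 1) u != 0.
Proof.
rewrite /supp_pick => s_neq; case: pickP => [u nz|gamma_s0]; first by exists u.
have : gamma (sing theta s 1) = gamma 0.
  by apply/ffunP => u; rewrite gamma0 ffunE; apply/eqP/negbFE/gamma_s0.
by move/gamma_inj/eqP; rewrite (negbTE (sing_neq0 s_neq (oner_neq0 D))).
Qed.

Lemma phi_theta : phi theta = theta.
Proof.
by rewrite /phi /supp_pick; case: pickP => // u; rewrite gamma_sing_theta ffunE eqxx.
Qed.

Lemma gamma_sing1 s : s != theta ->
  [/\ gamma (sing theta s 1) = sing theta (phi s) (eta s), eta s != 0 & phi s != theta].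
Proof.
move=> s_neq; have [u [pick_u gamma_u]] := supp_pick_some s_neq.
by rewrite /phi /eta pick_u (valP u); split=> //; apply: gamma_sing_monomial.
Qed.

Lemma phi_eq_theta s : (phi s == theta) = (s == theta).
Proof.
have [->|s_neq] := eqVneq s theta; first by rewrite phi_theta eqxx.
by case/gamma_sing1: s_neq => _ _ /negbTE.
Qed.

Lemma eta_unit s : s != theta -> eta s \is a GRing.unit.
Proof. by case/gamma_sing1 => _ /divD. Qed.

Lemma gamma_sing_idem e : e \in E -> exists v : Sstar theta,
  [/\ val v \in E, gamma (sing theta e 1) = sing theta (val v) 1 &
      forall d, gamma (sing theta e d) = sing theta (val v) (mu e d)].
Proof.
move=> eE; have [e' e'E gamma_e] := gammaE eE.
have e_neq := proj1 (sf_idem sqfS eE).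
have [v [pick_v gamma_v]] := supp_pick_some e_neq.
have v_e' : val v = e' by move: gamma_v; rewrite gamma_e => /sing_support.
exists v; rewrite v_e'; split=> // d.
by rewrite /mu pick_v -v_e'; apply: gamma_sing_monomial.
Qed.

Lemma mu1 e : e \in E -> mu e 1 = 1.
Proof.
by case/gamma_sing_idem => v [_ gamma_e /(_ 1)]; rewrite gamma_e => /sing_val_inj.
Qed.

Lemma gamma_sing e s d : e \in E -> s != theta -> mul e s = s ->
  gamma (sing theta s d) = sing theta (phi s) (mu e d * eta s).
Proof.
move=> eE s_neq es_s; have [v [vE _ gamma_e]] := gamma_sing_idem eE.
have [gamma_s eta_neq phi_neq] := gamma_sing1 s_neq.
have gamma_sd d' : gamma (sing theta s d') =
    tmul mul al xi (sing theta (val v) (mu e d')) (sing theta (phi s) (eta s)).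
  by rewrite -{1}[d']mulr1 -(tmul_idl_sing sqfS co_beze normal_beze _ _ eE s_neq es_s)
    gammaM gamma_e gamma_s.
have v_phi : mul (val v) (phi s) = phi s.
  have := gamma_sd 1; rewrite gamma_s tmul_sing_alxi mu1 // (proj1 (normal_alxi vE)).
  by move/(sing_inj phi_neq eta_neq) => [].
by rewrite gamma_sd (tmul_idl_sing sqfS co_alxi normal_alxi).
Qed.

Lemma mu_bij e : e \in E -> bijective (mu e).
Proof.
move=> eE; have [v [vE gamma_e gamma_ed]] := gamma_sing_idem eE.
have [e_neq e_idem] := sf_idem sqfS eE; have v_neq := valP v.
case: iso_gamma => _ _ _ [gamma_inv gammaK gamma_invK].
pose w : Sstar theta := exist _ e e_neq.
exists (fun d => gamma_inv (sing theta (val v) d) w) => [d|d] /=.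
  by rewrite -gamma_ed gammaK; apply: (sing_val w).
(* The preimage y of d e' lies in the corner e R e, hence is a multiple of e. *)
set y := gamma_inv _.
have y_corner : y = tmul mul be ze (sing theta e 1) (tmul mul be ze y (sing theta e 1)).
  apply: gamma_inj; rewrite !gammaM gamma_e gamma_invK.
  have v_idem := proj2 (sf_idem sqfS vE).
  by rewrite -(sing_corner sqfS co_alxi normal_alxi _ vE vE v_neq) ?v_idem.
have y_mono : y = sing theta e (y w).
  apply: (corner_eq_sing sqfS co_beze (u := w) eE eE y_corner).
  by exists e; rewrite /= !e_idem.
by apply: (sing_val_inj (u := v)); rewrite -gamma_ed -y_mono /y gamma_invK.
Qed.

Lemma mu_aut e : e \in E -> ring_aut (mu e).
Proof.
move=> eE; have [v [vE _ gamma_ed]] := gamma_sing_idem eE.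
have [e_neq e_idem] := sf_idem sqfS eE.
split; [move=> x y | move=> x y | exact: mu1 | exact: mu_bij].
  by apply: (sing_val_inj (u := v)); rewrite -gamma_ed singD gammaD !gamma_ed -singD.
apply: (sing_val_inj (u := v)); rewrite -gamma_ed.
have [v_neq v_idem] := sf_idem sqfS vE.
rewrite -(tmul_idl_sing sqfS co_beze normal_beze _ _ eE e_neq e_idem) gammaM !gamma_ed.
by rewrite (tmul_idl_sing sqfS co_alxi normal_alxi _ _ vE v_neq v_idem).
Qed.

Lemma gamma_tmul_sing s t : s != theta -> t != theta ->
  gamma (sing theta (mul s t) (ze s t)) =
  sing theta (mul (phi s) (phi t)) (eta s * al (phi s) (eta t) * xi (phi s) (phi t)).
Proof.
move=> s_neq t_neq; have [gamma_s _ _] := gamma_sing1 s_neq.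
have [gamma_t _ _] := gamma_sing1 t_neq.
have -> : sing theta (mul s t) (ze s t) =
    tmul mul be ze (sing theta s 1) (sing theta t 1).
  rewrite (tmul_sing ze (sf_theta sqfS) (cocycle_al0 co_beze)).
  by rewrite (cocycle_al1 co_beze s_neq) !mul1r.
by rewrite gammaM gamma_s gamma_t tmul_sing_alxi.
Qed.

Lemma phi_mul s t : phi (mul s t) = mul (phi s) (phi t).
Proof.
have theta_mul u : mul theta u = theta by case: (sf_theta sqfS u).
have mul_theta u : mul u theta = theta by case: (sf_theta sqfS u).
have [->|s_neq] := eqVneq s theta; first by rewrite !theta_mul phi_theta.
have [->|t_neq] := eqVneq t theta; first by rewrite !mul_theta phi_theta.
case: co_alxi => al_aut xiU _ _; case: co_beze => _ zeU _ _.
have [_ _ phi_s] := gamma_sing1 s_neq.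
have coef_unit : mul (phi s) (phi t) != theta ->
    eta s * al (phi s) (eta t) * xi (phi s) (phi t) \is a GRing.unit.
  move=> phi_st; rewrite unitrMl ?xiU // unitrMr ?eta_unit //.
  exact: ring_aut_unit (al_aut _ phi_s) (eta_unit t_neq).
have prod := gamma_tmul_sing s_neq t_neq.
have [st_theta|st_neq] := eqVneq (mul s t) theta.
  rewrite st_theta phi_theta; apply/esym/eqP; apply: contraT => phi_st.
  have := sing_neq0 phi_st (unit_neq0 (coef_unit phi_st)).
  by rewrite -prod st_theta gamma_sing_theta eqxx.
have phi_st : mul (phi s) (phi t) != theta.
  apply: contra_neq (sing_neq0 st_neq (unit_neq0 (zeU s t st_neq))) => phi_st.
  by apply: gamma_inj; rewrite prod phi_st sing_theta gamma0.
have [u [pick_u gamma_u]] := supp_pick_some st_neq.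
move: prod; rewrite (gamma_sing_monomial _ st_neq gamma_u).
by move=> /esym /(sing_inj phi_st (unit_neq0 (coef_unit phi_st))) [-> _]; rewrite /phi pick_u.
Qed.

Lemma phi_inj : injective phi.
Proof.
move=> s s' phi_eq.
have [s_theta|s_neq] := eqVneq s theta.
  by apply/esym/eqP; rewrite s_theta -phi_eq_theta -phi_eq s_theta phi_theta.
have s'_neq : s' != theta by rewrite -phi_eq_theta -phi_eq phi_eq_theta.
have [e [f [eE fE s_def]]] := sf_corner sqfS s.
have [_ _ _ [mu_inv _ mu_invK]] := mu_aut eE.
have [gamma_s' _ _] := gamma_sing1 s'_neq.
have := gamma_sing (mu_inv (eta s' / eta s)) eE s_neq (corner_idl sqfS eE s_def).
rewrite mu_invK divrK ?eta_unit // phi_eq -gamma_s' => /gamma_inj /esym.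
by case/(sing_inj s'_neq (oner_neq0 D)).
Qed.

End Isomorphism.

Theorem mainTheorem2 (S : finType) (mul : S -> S -> S) (theta : S) (E : {set S})
  (D : unitRingType) (al : S -> D -> D) (xi : S -> S -> D)
  (be : S -> D -> D) (ze : S -> S -> D)
  (gamma : twisted theta D -> twisted theta D) :
  square_free mul theta E ->
  division_ring D ->
  cocycle2 mul theta al xi -> normal_cocycle E al xi ->
  cocycle2 mul theta be ze -> normal_cocycle E be ze ->
  ring_iso E (tmul mul be ze) (tmul mul al xi) gamma ->
  (forall e, e \in E -> exists2 f, f \in E & gamma (sing theta e 1) = sing theta f 1) ->
  (forall f, f \in E -> exists2 e, e \in E & gamma (sing theta e 1) = sing theta f 1) ->
  exists (phi : S -> S) (mu : S -> D -> D) (eta : S -> D),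
    [/\ semigroup_aut mul phi,
        (forall e, e \in E -> ring_aut (mu e)),
        (forall s, s != theta -> eta s \is a GRing.unit)
      & forall (s : Sstar theta) (e f : S), e \in E -> f \in E ->
          val s = mul (mul e (val s)) f ->
          forall d : D, gamma (sing theta (val s) d) = sing theta (phi (val s)) (mu e d * eta (val s))].
Proof.
(* Only gamma(E) \subset E is needed. *)
move=> sqfS divD co_alxi normal_alxi co_beze normal_beze iso_gamma gammaE _.
exists (phi gamma), (mu gamma), (eta gamma); split.
- split; last exact: phi_mul sqfS divD co_alxi co_beze normal_beze iso_gamma gammaE.
  apply: injF_bij.
  exact: phi_inj sqfS divD co_alxi normal_alxi co_beze normal_beze iso_gamma gammaE.
- exact: mu_aut sqfS co_alxi normal_alxi co_beze normal_beze iso_gamma gammaE.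
- exact: eta_unit sqfS divD co_alxi co_beze normal_beze iso_gamma gammaE.
move=> s e f eE _ s_def d.
have es_s := corner_idl sqfS eE s_def.
apply: (gamma_sing sqfS co_alxi normal_alxi co_beze normal_beze iso_gamma gammaE d eE) => //.
exact: (valP s).
Qed.
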